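(* Let $q$ be a prime power and $b,k,t$ positive integers with $k>t$. Then \[ r_b^{wt_b}(k,t)\ge\frac{5q^b(t-b+2)(t-b+1)}{3(q^b-1)(t-b+3)}. \]
   Context: For $\boldsymbol{z}=(z_0,\ldots,z_{n-1}),\boldsymbol{w}\in\mathbb{F}_q^n$, $d_b(\boldsymbol{z},\boldsymbol{w})$ is the number of $i\in\{0,\ldots,n-1\}$ with $(z_i,\ldots,z_{i+b-1})\ne(w_i,\ldots,w_{i+b-1})$ (indices mod $n$), and $wt_b(\boldsymbol{x})=d_b(\boldsymbol{x},\boldsymbol{0})$ is the $b$-symbol weight function on $\mathbb{F}_q^k$. A systematic encoding $\mathrm{Enc}(\boldsymbol{x})=(\boldsymbol{x},p(\boldsymbol{x}))\in\mathbb{F}_q^{k+r}$ is a function-correcting $b$-symbol code for $f$ if $d_b(\mathrm{Enc}(\boldsymbol{x}_1),\mathrm{Enc}(\boldsymbol{x}_2))\ge 2t+1$ whenever $f(\boldsymbol{x}_1)\ne f(\boldsymbol{x}_2)$; $r_b^f(k,t)$ is the smallest $r$ for which one exists. *)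

From mathcomp Require Import all_boot all_order all_algebra all_field.
Set Implicit Arguments. Unset Strict Implicit. Unset Printing Implicit Defensive.
Import GRing.Theory Num.Theory.
Local Open Scope ring_scope.

(* Entry of a length-n vector at index m taken modulo n (n > 0 whenever the
   vector has an index; for n = 0 there are no positions anyway). *)
Definition cyc (F : finFieldType) (n : nat) (z : 'rV[F]_n) (m : nat) : F :=
  match @insub nat (fun i => i < n)%N 'I_n (m %% n)%N with
  | Some i => z 0 i
  | None => 0
  end.

Definition dist_b (F : finFieldType) (n b : nat) (z w : 'rV[F]_n) : nat :=
  #|[set i : 'I_n | [exists j : 'I_b, cyc z (i + j)%N != cyc w (i + j)%N]]|.

Definition wt_b (F : finFieldType) (k b : nat) (x : 'rV[F]_k) : nat :=
  dist_b b x 0.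

Definition enc (F : finFieldType) (k r : nat) (p : 'rV[F]_k -> 'rV[F]_r)
  (x : 'rV[F]_k) : 'rV[F]_(k + r) := row_mx x (p x).

Definition is_FCbSC (F : finFieldType) (k r b t : nat) (T : eqType)
  (f : 'rV[F]_k -> T) (p : 'rV[F]_k -> 'rV[F]_r) : Prop :=
  forall x1 x2 : 'rV[F]_k, f x1 != f x2 ->
    (2 * t + 1 <= dist_b b (enc p x1) (enc p x2))%N.

(* r is an admissible redundancy; r_b^f(k,t) is the least such r. *)
Definition fc_redundancy_ok (F : finFieldType) (k r b t : nat) (T : eqType)
  (f : 'rV[F]_k -> T) : Prop :=
  exists p : 'rV[F]_k -> 'rV[F]_r, is_FCbSC b t f p.

From mathcomp Require Import all_boot all_order all_algebra all_field.
From mathcomp Require Import zify.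
Import Order.TTheory GRing.Theory Num.Theory.

(* The words Enc(1^j 0^(k-j)), 0 <= j <= t-b+2, have pairwise distinct
   b-weights, hence pairwise b-distance at least 2t+1.  The b-windows lying
   inside the information part of the words i and j differ at most
   |i-j|+b-1 times, so the r+b-1 remaining windows must make up the rest.
   Two consecutive words give r >= 2(t-b+1), which implies the bound when
   q^b > t-b+3.  Otherwise sum over all pairs, as in the Plotkin bound: at
   each remaining window at most a fraction 1-1/q^b of the pairs differ. *)

Set Implicit Arguments. Unset Strict Implicit. Unset Printing Implicit Defensive.

Lemma card_ord_interval n (A : {pred 'I_n}) lo hi :
  {in A, forall u : 'I_n, lo <= u < hi} -> #|A| <= hi - lo.
Proof.
move=> A_sub; rewrite cardE -(size_map val) -(size_iota lo (hi - lo)).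
apply: uniq_leq_size => [|m /mapP[u]].
  by rewrite map_inj_uniq ?enum_uniq //; exact: val_inj.
by rewrite mem_enum => /A_sub /andP[lo_u u_hi] ->; rewrite mem_iota lo_u /=; lia.
Qed.

Lemma sum_distn_ord M : 3 * \sum_(i < M) \sum_(j < M) `|i - j| + M = M ^ 3.
Proof.
have sum_dist_last m : 2 * \sum_(i < m) `|m - i| = m * m.+1.
  elim: m => [|m IHm]; first by rewrite big_ord0.
  rewrite big_ord_recl /=.
  under eq_bigr => i _ do rewrite [bump 0 i]/bump /= (distnDl 1 m i).
  rewrite mulnDr IHm; nia.
elim: M => [|M IHM]; first by rewrite big_ord0.
rewrite big_ord_recr /= big_ord_recr /= distnn addn0.
under eq_bigr => i _ do rewrite big_ord_recr /= distnC.
rewrite big_split /=.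
move: (sum_dist_last M) IHM.
(* [set] identifies the sums up to conversion, so that [nia] sees them as atoms. *)
set S := \sum_(i < M) \sum_(j < M) _; set T := \sum_(i < M) _.
nia.
Qed.

Lemma sqr_sum_le_card_mul_sum_sqr (Y : finType) (c : Y -> nat) :
  (\sum_y c y) ^ 2 <= #|Y| * \sum_y c y ^ 2.
Proof.
have sqr_sum : (\sum_y c y) ^ 2 = \sum_y \sum_z c y * c z.
  by rewrite -mulnn big_distrl; apply: eq_bigr => y _; rewrite big_distrr.
have sum_sqr2 : \sum_y \sum_z (c y ^ 2 + c z ^ 2) = 2 * (#|Y| * \sum_y c y ^ 2).
  under eq_bigr do rewrite big_split /= sum_nat_const.
  by rewrite big_split /= sum_nat_const -big_distrr mul2n addnn.
rewrite -(leq_pmul2l (isT : 0 < 2)) -sum_sqr2 sqr_sum big_distrr /=.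
apply: leq_sum => y _; rewrite big_distrr /=; apply: leq_sum => z _.
exact: nat_Cauchy.
Qed.

Lemma sqr_le_card_mul_sum_eq (Y : finType) M (g : 'I_M -> Y) :
  M ^ 2 <= #|Y| * \sum_(i < M) \sum_(j < M) (g i == g j).
Proof.
pose c y := \sum_(i < M | g i == y) 1.
have sum_c : \sum_y c y = M.
  by rewrite -[RHS]card_ord -sum1_card (partition_big g predT).
have sum_eq : \sum_(i < M) \sum_(j < M) (g i == g j) = \sum_y c y ^ 2.
  transitivity (\sum_(i < M) c (g i)).
    apply: eq_bigr => i _; rewrite /c [RHS]big_mkcond.
    by apply: eq_bigr => j _; rewrite eq_sym; case: eqP.
  rewrite (partition_big g predT) //=; apply: eq_bigr => y _.
  rewrite (eq_bigr (fun=> c y * 1)) => [|i /eqP->]; last by rewrite muln1.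
  by rewrite -big_distrr.
by rewrite sum_eq -{1}sum_c sqr_sum_le_card_mul_sum_sqr.
Qed.

Lemma card_mul_sum_neq_le (Y : finType) M (g : 'I_M -> Y) :
  #|Y| * \sum_(i < M) \sum_(j < M) (g i != g j) <= M ^ 2 * (#|Y| - 1).
Proof.
have neq_eq : \sum_(i < M) \sum_(j < M) (g i != g j)
    + \sum_(i < M) \sum_(j < M) (g i == g j) = M ^ 2.
  rewrite -big_split -mulnn -[X in X * _]card_ord -sum_nat_const; apply: eq_bigr => i _.
  rewrite -big_split /= -[RHS]card_ord -sum1_card.
  by apply: eq_bigr => j _; rewrite addn_negb.
have := sqr_le_card_mul_sum_eq g; nia.
Qed.

Lemma sum_nat_of_bool (T : finType) (P Q : pred T) :
  \sum_(u | P u) Q u = #|[set u | P u && Q u]|.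
Proof. by rewrite -sum1dep_card big_mkcondr; apply: eq_bigr => u _; case: (Q u). Qed.

Lemma cycE (F : finFieldType) n (z : 'rV[F]_n) m (n_gt0 : 0 < n) :
  cyc z m = z 0%R (Ordinal (ltn_pmod m n_gt0)).
Proof.
rewrite /cyc (insubT (fun i => i < n) (ltn_pmod m n_gt0)) /=.
by congr (z 0%R _); apply: val_inj.
Qed.

Definition window (F : finFieldType) n b (z : 'rV[F]_n) (u : nat) : {ffun 'I_b -> F} :=
  [ffun i : 'I_b => cyc z (u + i)].

Lemma window_neq (F : finFieldType) n b (z w : 'rV[F]_n) u :
  (window b z u != window b w u) = [exists i : 'I_b, cyc z (u + i) != cyc w (u + i)].
Proof.
rewrite -negb_forall; congr negb; apply/eqP/forallP => [zw_u i | zw_u].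
  by apply/eqP; move/ffunP/(_ i): zw_u; rewrite !ffunE.
by apply/ffunP => i; rewrite !ffunE; apply/eqP.
Qed.

Lemma dist_b_window (F : finFieldType) n b (z w : 'rV[F]_n) :
  dist_b b z w = \sum_(u < n) (window b z u != window b w u).
Proof.
by rewrite (sum_nat_of_bool predT); apply: eq_card => u; rewrite !inE window_neq.
Qed.

Lemma cyc_enc (F : finFieldType) k r (p : 'rV[F]_k -> 'rV[F]_r) x m (m_lt_k : m < k) :
  cyc (enc p x) m = x 0%R (Ordinal m_lt_k).
Proof.
have kr_gt0 : 0 < k + r by lia.
rewrite (cycE _ _ kr_gt0) /enc.
have -> : Ordinal (ltn_pmod m kr_gt0) = lshift r (Ordinal m_lt_k).
  by apply: val_inj; rewrite /= modn_small //; lia.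
by rewrite row_mxEl.
Qed.

Definition prefix_ones (F : finFieldType) k j : 'rV[F]_k := \row_(i < k) ((i < j)%:R)%R.

Lemma cyc_enc_prefix_ones (F : finFieldType) k r (p : 'rV[F]_k -> 'rV[F]_r) j m :
  m < k -> cyc (enc p (prefix_ones F k j)) m = ((m < j)%:R)%R.
Proof. by move=> m_lt_k; rewrite (cyc_enc _ _ m_lt_k) mxE. Qed.

Lemma wt_b_prefix_ones (F : finFieldType) k b j : 0 < k ->
  wt_b b (prefix_ones F k j) = #|[set u : 'I_k | [exists i : 'I_b, (u + i) %% k < j]]|.
Proof.
move=> k_gt0; apply: eq_card => u; rewrite !inE; apply: eq_existsb => i.
by rewrite !(cycE _ _ k_gt0) !mxE; case: (_ < j); rewrite ?oner_eq0 ?eqxx.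
Qed.

Lemma wt_b_prefix_ones_ltS (F : finFieldType) k b j : 0 < b -> j + b <= k ->
  wt_b b (prefix_ones F k j) < wt_b b (prefix_ones F k j.+1).
Proof.
move=> b_gt0 jb_le_k; have k_gt0 : 0 < k by lia.
have j_lt_k : j < k by lia.
rewrite !wt_b_prefix_ones //; apply/proper_card/properP; split.
  by apply/subsetP => u; rewrite !inE => /existsP[i ui_lt_j]; apply/existsP; exists i; lia.
exists (Ordinal j_lt_k); rewrite !inE.
  by apply/existsP; exists (Ordinal b_gt0); rewrite /= addn0 modn_small.
apply/existsPn => i /=; have i_lt_b := ltn_ord i.
by rewrite modn_small -?leqNgt ?leq_addr //; lia.
Qed.

Lemma wt_b_prefix_ones_inj (F : finFieldType) k b j j' :
  0 < b -> j + b <= k.+1 -> j' + b <= k.+1 -> j != j' ->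
  wt_b b (prefix_ones F k j) != wt_b b (prefix_ones F k j').
Proof.
move=> b_gt0; pose D := [pred j | j + b <= k.+1].
have wt_mono : {in D &, {homo (fun j => wt_b b (prefix_ones F k j)) :
    j j' / j < j' >-> j < j'}}.
  apply: homo_ltn_in => [j1 j2 j3|j1 j2|j1]; first exact: ltn_trans.
    by rewrite !inE => _ Dj2 j3 /andP[_ lt_j3j2]; rewrite inE; lia.
  by rewrite !inE => _ Dj1; apply: wt_b_prefix_ones_ltS; lia.
move=> Dj Dj'; rewrite !neq_ltn => /orP[lt_jj' | lt_j'j].
  by rewrite (wt_mono j j').
by rewrite (wt_mono j' j) ?orbT.
Qed.

Lemma plotkin_arith a b Q r D E : 0 < b -> 0 < Q ->
  (a + 3) * (a + 2) * (2 * a + b + 2) <= D + E ->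
  3 * D + (a + 3) = (a + 3) ^ 3 ->
  Q * E <= (r + b - 1) * ((a + 3) ^ 2 * (Q - 1)) ->
  Q * (a + 2) * (5 * a + 3 * b + 2) <= 3 * (r + b - 1) * (a + 3) * (Q - 1).
Proof.
move=> b_gt0 Q_gt0 pairs sumD sumE.
rewrite -(@leq_pmul2l (a + 3)); last by rewrite addn_gt0 orbT.
(* [3Q * pairs], with [D] eliminated by [Q * sumD] and [E] bounded by [sumE]. *)
have := leq_mul (leqnn (3 * Q)) pairs.
by have := congr1 (muln Q) sumD; lia.
Qed.

Lemma card_exp_gt1 (F : finFieldType) b : 0 < b -> 1 < #|F| ^ b.
Proof. by rewrite -[1](expn0 #|F|) ltn_exp2l ?card_finNzRing_gt1. Qed.

Section PrefixCode.
Variables (F : finFieldType) (b k t r : nat) (p : 'rV[F]_k -> 'rV[F]_r).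
Hypotheses (b_gt0 : 0 < b) (b_le_t : b <= t) (t_lt_k : t < k).
Hypothesis p_FC : is_FCbSC b t (@wt_b F k b) p.

Let word j := enc p (prefix_ones F k j).
Let differ j j' (u : 'I_(k + r)) := window b (word j) u != window b (word j') u.
(* Windows starting after k - b run into the redundancy (or wrap around). *)
Let tail_diff j j' := \sum_(u : 'I_(k + r) | k - b < u) differ j j' u.

Lemma head_diff_le j j' :
  \sum_(u : 'I_(k + r) | u <= k - b) differ j j' u <= `|j - j'| + (b - 1).
Proof.
rewrite sum_nat_of_bool.
apply: leq_trans (card_ord_interval (lo := minn j j' - (b - 1)) (hi := maxn j j') _) _;
  last by lia.
move=> u; rewrite inE => /andP[u_le]; rewrite /differ window_neq => /existsP[i].
have i_lt_b := ltn_ord i; rewrite !cyc_enc_prefix_ones; try lia.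
by case: (ltnP (u + i) j); case: (ltnP (u + i) j'); rewrite ?eqxx //; lia.
Qed.

Lemma card_tail_le : #|[set u : 'I_(k + r) | k - b < u]| <= r + b - 1.
Proof.
apply: leq_trans (card_ord_interval (lo := (k - b).+1) (hi := k + r) _) _; last by lia.
by move=> u; rewrite inE => ->; apply: ltn_ord.
Qed.

Lemma tail_diff_le j j' : tail_diff j j' <= r + b - 1.
Proof.
apply: leq_trans card_tail_le; rewrite -sum1dep_card.
by apply: leq_sum => u _; apply: leq_b1.
Qed.

Lemma dist_word_le j j' :
  dist_b b (word j) (word j') <= `|j - j'| + (b - 1) + tail_diff j j'.
Proof.
rewrite dist_b_window (bigID (fun u : 'I_(k + r) => u <= k - b)) /=.
apply: leq_add; first exact: head_diff_le.
by apply/eq_leq/eq_bigl => u; rewrite ltnNge.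
Qed.

Lemma word_dist_ge j j' : j != j' -> j <= t - b + 2 -> j' <= t - b + 2 ->
  2 * t + 1 <= dist_b b (word j) (word j').
Proof. by move=> neq_jj' j_le j'_le; apply: p_FC; apply: wt_b_prefix_ones_inj => //; lia. Qed.

Lemma redundancy_ge_double : 2 * (t - b + 1) <= r.
Proof.
have := leq_trans (word_dist_ge (j := 0) (j' := 1) isT (leq0n _) _) (dist_word_le 0 1).
have := tail_diff_le 0 1; rewrite dist0n; lia.
Qed.

Lemma pair_dist_bound j j' : j <= t - b + 2 -> j' <= t - b + 2 ->
  (j != j') * (2 * (t - b) + b + 2) <= `|j - j'| + tail_diff j j'.
Proof.
move=> j_le j'_le; have [//|neq_jj'] := eqVneq j j'.
by have := leq_trans (word_dist_ge neq_jj' j_le j'_le) (dist_word_le j j'); lia.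
Qed.

Lemma sum_tail_diff_le M :
  #|F| ^ b * \sum_(j < M) \sum_(j' < M) tail_diff j j'
    <= (r + b - 1) * (M ^ 2 * (#|F| ^ b - 1)).
Proof.
have card_window : #|{ffun 'I_b -> F}| = #|F| ^ b by rewrite card_ffun card_ord.
rewrite /tail_diff; under eq_bigr do rewrite exchange_big /=.
rewrite exchange_big /= big_distrr /=.
apply: (@leq_trans (\sum_(u : 'I_(k + r) | k - b < u) M ^ 2 * (#|F| ^ b - 1))).
  apply: leq_sum => u _; rewrite -card_window.
  exact: card_mul_sum_neq_le (fun j : 'I_M => window b (word j) u).
by rewrite sum_nat_cond_const leq_mul2r card_tail_le orbT.
Qed.

Lemma redundancy_plotkin :
  #|F| ^ b * (t - b + 2) * (5 * (t - b) + 3 * b + 2)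
    <= 3 * (r + b - 1) * (t - b + 3) * (#|F| ^ b - 1).
Proof.
set M := t - b + 3.
have count_neq (j : 'I_M) : \sum_(j' < M) (j != j' :> nat) = t - b + 2.
  have -> : t - b + 2 = #|'I_M|.-1 by rewrite card_ord /M addn2 addn3.
  rewrite (sum_nat_of_bool predT) -(cardC1 j); apply: eq_card => j'.
  by rewrite !inE eq_sym.
have sum_pairs : M * (t - b + 2) * (2 * (t - b) + b + 2) <=
    \sum_(j < M) \sum_(j' < M) `|j - j'| + \sum_(j < M) \sum_(j' < M) tail_diff j j'.
  have -> : M * (t - b + 2) * (2 * (t - b) + b + 2) =
      \sum_(j < M) \sum_(j' < M) (j != j' :> nat) * (2 * (t - b) + b + 2).
    rewrite -mulnA -[M in M * _]card_ord -sum_nat_const.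
    by apply: eq_bigr => j _; rewrite -big_distrl /= count_neq.
  rewrite -big_split; apply: leq_sum => j _; rewrite -big_split; apply: leq_sum => j' _.
  by apply: pair_dist_bound; have := ltn_ord j; have := ltn_ord j'; lia.
exact: plotkin_arith b_gt0 (ltnW (card_exp_gt1 F b_gt0)) sum_pairs (sum_distn_ord M)
  (sum_tail_diff_le M).
Qed.

End PrefixCode.

Lemma redundancy_bound_arith a b Q r : 0 < b -> 1 < Q ->
  2 * (a + 1) <= r ->
  Q * (a + 2) * (5 * a + 3 * b + 2) <= 3 * (r + b - 1) * (a + 3) * (Q - 1) ->
  5 * Q * (a + 1) * (a + 2) <= 3 * r * (Q - 1) * (a + 3).
Proof.
case: b => // b _; case: Q => // Q _ r_ge.
rewrite !subSS !subn0 (_ : r + b.+1 - 1 = r + b); last by lia.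
move=> plotkin; have [Q_le | Q_gt] := leqP Q.+1 (a + 3).
  by have := leq_mul (leqnn b) Q_le; lia.
have := leq_mul (leq_mul r_ge (leqnn Q)) (leqnn (a + 3)).
by have := leq_mul (leqnn ((a + 1) * (a + 8))) Q_gt; lia.
Qed.

Lemma wt_b_redundancy_ge (F : finFieldType) b k t r :
  0 < b -> b <= t -> t < k -> fc_redundancy_ok r b t (@wt_b F k b) ->
  5 * #|F| ^ b * (t - b + 1) * (t - b + 2) <= 3 * r * (#|F| ^ b - 1) * (t - b + 3).
Proof.
move=> b_gt0 b_le_t t_lt_k [p p_FC].
apply: (redundancy_bound_arith b_gt0 (card_exp_gt1 F b_gt0)).
  exact: redundancy_ge_double b_gt0 b_le_t t_lt_k p_FC.
exact: redundancy_plotkin b_gt0 b_le_t t_lt_k p_FC.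
Qed.

Local Open Scope ring_scope.

(* Covers t < b, with x = t - b; the denominator vanishes at x = -3, where x / 0 = 0. *)
Lemma redundancy_bound_le0 (R : numFieldType) (Q : nat) (x : int) : (1 < Q)%N -> x < 0 ->
  ((5 * Q%:Z * (x + 2) * (x + 1))%:~R / ((3 * (Q%:Z - 1) * (x + 3))%:~R) : R) <= 0.
Proof.
move=> Q_gt1 x_lt0; have [x_le | x_gt] := lerP x (-3).
  by apply: mulr_ge0_le0; rewrite ?invr_le0 ?ler0z ?lerz0; nia.
have [->|->] : x = -2 \/ x = -1 by lia.
  by rewrite addNr mulr0 !mul0r.
by rewrite addNr !mulr0 mul0r.
Qed.

Theorem mainTheorem17 (F : finFieldType) (b k t : nat) :
  (0 < b)%N -> (0 < t)%N -> (t < k)%N ->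
  forall r : nat, fc_redundancy_ok r b t (@wt_b F k b) ->
  ((5 * (#|F| ^ b)%:Z * (t%:Z - b%:Z + 2) * (t%:Z - b%:Z + 1))%:~R
     / ((3 * ((#|F| ^ b)%:Z - 1) * (t%:Z - b%:Z + 3))%:~R) : rat)
  <= (r%:R : rat).
Proof.
move=> b_gt0 _ t_lt_k r r_ok; have Q_gt1 := card_exp_gt1 F b_gt0.
have [b_le_t | t_lt_b] := leqP b t; last first.
  by apply: le_trans (ler0n _ r); apply: redundancy_bound_le0; rewrite // subr_lt0 ltz_nat.
have := wt_b_redundancy_ge b_gt0 b_le_t t_lt_k r_ok.
rewrite ler_pdivrMr ?ltr0z; last by nia.
rewrite -[r%:R]/(r%:Z%:~R) -intrM ler_int.
rewrite (subzn b_le_t) -[1%R]/(Posz 1) (subzn (ltnW Q_gt1)) -!PoszD -!PoszM lez_nat.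
by move: (t - b)%N (#|F| ^ b - 1)%N => a Q1; lia.
Qed.
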